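(* Each of $\mathtt{CA}$, $\mathtt{SUR}$ and $\mathtt{REV}$, with the topology induced by the metric $\delta$, is a perfect space, i.e. has no isolated points.
   Context: $\Sigma$ is a finite alphabet with $|\Sigma|\ge2$, $N(r)=[-r,r]$. A cellular automaton (CA) is a map $c:\Sigma^\mathbb{Z}\to\Sigma^\mathbb{Z}$ of the form $c(x)_i=F(x_{[i-r,i+r]})$ for a local function $F:\Sigma^{N(r)}\to\Sigma$. $\mathtt{CA}$ is the set of all CA, $\mathtt{SUR}$ the surjective and $\mathtt{REV}$ the injective ones. For $c,d\in\mathtt{CA}$ with common radius $r$, $D^c_d$ is the set of $w\in\Sigma^{N(r)}$ on which the local rules of $c$ and $d$ give different outputs, and $\delta(c,d)=|D^c_d|/|\Sigma|^{2r+1}$ (independent of $r$). *)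

From Stdlib Require Import ClassicalEpsilon.
From HB Require Import structures.
From mathcomp Require Import all_boot all_order all_algebra.
Set Implicit Arguments. Unset Strict Implicit. Unset Printing Implicit Defensive.
Import Order.TTheory GRing.Theory Num.Theory.

(* Configurations over the alphabet S : finType are maps int -> S (S^Z).
   A word on the neighbourhood N(r) = [-r, r] is a finite function on
   'I_(2r+1); index k stands for position k - r. *)
Definition config (S : finType) := int -> S.
Definition word (S : finType) (r : nat) := {ffun 'I_(r.*2.+1) -> S}.

Definition window (S : finType) (r : nat) (x : config S) (i : int) : word S r :=
  [ffun k : 'I_(r.*2.+1) => x (i - Posz r + Posz (k : nat))%R].

Definition has_radius (S : finType) (r : nat) (c : config S -> config S) : Prop :=
  exists F : word S r -> S, forall (x : config S) (i : int), c x i = F (window r x i).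

Definition isCA (S : finType) (c : config S -> config S) : Prop :=
  exists r : nat, has_radius r c.
Definition isSUR (S : finType) (c : config S -> config S) : Prop :=
  isCA c /\ (forall y : config S, exists x, c x = y).
Definition isREV (S : finType) (c : config S -> config S) : Prop :=
  isCA c /\ (forall x y : config S, c x = c y -> x = y).

Definition extend (S : finType) (r : nat) (w : word S r) : config S :=
  fun j => if ((0 <= j + Posz r)%R && (j + Posz r < Posz r.*2.+1)%R)
           then w (inord (absz (j + Posz r)%R)) else w ord0.

(* Local rule of c at radius r (meaningful when c has radius r). *)
Definition local_rule (S : finType) (r : nat) (c : config S -> config S)
  (w : word S r) : S := c (extend w) 0%R.

Definition Dset (S : finType) (r : nat) (c d : config S -> config S) : {set word S r} :=
  [set w : word S r | local_rule c w != local_rule d w].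

Definition delta_at (S : finType) (r : nat) (c d : config S -> config S) : rat :=
  (#|Dset r c d|%:R / (#|S| ^ r.*2.+1)%:R)%R.

(* delta(c,d): computed at a common radius of c and d (chosen by
   classical choice; the value is independent of the choice). *)
Definition common_radius (S : finType) (c d : config S -> config S) : nat :=
  epsilon (inhabits 0%N) (fun r => has_radius r c /\ has_radius r d).
Definition delta (S : finType) (c d : config S -> config S) : rat :=
  delta_at (common_radius c d) c d.

Definition perfect (S : finType) (X : (config S -> config S) -> Prop) : Prop :=
  forall c, X c -> forall eps : rat, (0 < eps)%R ->
    exists d, X d /\ d <> c /\ (delta c d < eps)%R.

From HB Require Import structures.
From mathcomp Require Import all_boot all_order all_algebra.
From mathcomp Require Import zify ring.
From Stdlib Require Import ClassicalEpsilon FunctionalExtensionality.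
Set Implicit Arguments. Unset Strict Implicit. Unset Printing Implicit Defensive.
Import Order.TTheory GRing.Theory Num.Theory.

(* Fix two letters a <> b and a length R >= 1.  A site i of a
   configuration x carries the pattern P_R when x(i-R-1) = b, x(i-k) = a and
   x(i+k) = b for 1 <= k <= R; two occurrences of P_R are never within
   distance R+1 of each other.  Hence the map g_R, which swaps a and b at the
   centre of every occurrence of P_R, is an involutive CA of radius R+1.
   Given a CA c of radius r we perturb it only at occurrences of P_R:
   - for CA, toggle the output of c at pattern centres (this visibly
     changes c on a configuration containing P_R);
   - for SUR and REV, take c o g_R, which stays surjective resp. injective as
     g_R is a bijection.
   Both perturbations differ from c only on words containing P_R within
   distance r of the centre, a proportion at most (2r+1)|S|^(-R), so delta is
   below eps once R is large.  That c o g_R <> c is clear for injective c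
   since g_R moves some configuration; for surjective c it is a
   Garden-of-Eden count: if c o g_R = c (and 2r <= R+1), flipping a single
   pattern centre never changes the image, so sequences of blocks of length
   2R+2 avoiding one fixed block already yield every image word, and there
   are too few of them for long words. *)

Lemma card_bigcup_le (T : finType) n (E : 'I_n -> {set T}) :
  #|\bigcup_(k < n) E k| <= \sum_(k < n) #|E k|.
Proof.
apply: (big_ind2 (fun (A : {set T}) m => #|A| <= m)) => //; first by rewrite cards0.
by move=> A1 m1 A2 m2 h1 h2; apply: leq_trans (leq_card_setU A1 A2) _; apply: leq_add.
Qed.

Lemma card_words_fixed_on (S : finType) n (K : {set 'I_n}) (s : S) :
  #|[set w : {ffun 'I_n -> S} | [forall p in K, w p == s]]| = #|S| ^ (n - #|K|).
Proof.
pose F := fun p : 'I_n => if p \in K then pred1 s else predT.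
have fixed_family : [set w : {ffun 'I_n -> S} | [forall p in K, w p == s]] =i family F.
  move=> w; rewrite inE; apply/forall_inP/familyP => /= H p.
    by rewrite /F; case: ifP => Hp; [exact: H | by []].
  by move=> Hp; have := H p; rewrite /F Hp.
rewrite (eq_card fixed_family) card_family foldrE big_map big_enum /=.
rewrite (eq_bigr (fun p => if p \notin K then #|S| else 1)); last first.
  by move=> p _; rewrite /F; case: ifP => _ /=; [rewrite card1 | rewrite cardT -cardE].
rewrite -big_mkcond /= prod_nat_const.
have cardC : #|(fun i : 'I_n => i \notin K)| = #|~: K| by apply: eq_card => p; rewrite inE.
congr (_ ^ _); have := cardsC K; rewrite card_ord cardC.
by move: #|~: K| #|K| => u v; lia.
Qed.

Lemma bernoulli_nat (B n : nat) : B ^ n * (B + n) <= B.+1 ^ n * B.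
Proof.
elim: n => [|n IH]; first by rewrite !expn0 !mul1n addn0.
have le_pow : B ^ n <= B.+1 ^ n by case: n {IH} => [|n]; [rewrite !expn0 | rewrite leq_exp2r].
rewrite !expnS (_ : B * B ^ n * (B + n.+1) = B * (B ^ n * (B + n)) + B * B ^ n); last by ring.
apply: (@leq_trans (B * (B.+1 ^ n * B) + B * B.+1 ^ n)).
  by apply: leq_add; rewrite leq_mul2l ?IH ?le_pow orbT.
by rewrite (_ : B * (B.+1 ^ n * B) + B * B.+1 ^ n = B.+1 * B.+1 ^ n * B) //; ring.
Qed.

(* For K = (q^L - 1) q^(2r) blocks of length L, sequences of K blocks avoiding
   one fixed block word are fewer than words of length K L - 2r. *)
Lemma block_count_gap (q L r : nat) : 1 < q -> 0 < L ->
  let K := ((q ^ L).-1 * q ^ r.*2)%N in 0 < K /\ (q ^ L).-1 ^ K < q ^ (K * L - r.*2).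
Proof.
move=> q_gt1 L_gt0 K; set B := (q ^ L).-1.
have B_gt0 : 0 < B by rewrite /B -subn1 subn_gt0 -{1}(expn0 q) ltn_exp2l.
have pow_gt0 : 0 < q ^ r.*2 by rewrite expn_gt0; lia.
have K_gt0 : 0 < K by rewrite /K muln_gt0 B_gt0 pow_gt0.
split => //.
have r_lt_pow : r.*2 < q ^ r.*2 by apply: ltn_expl.
have r_le_KL : r.*2 <= K * L.
  apply: leq_trans (ltnW r_lt_pow) _; rewrite /K (mulnC B) -mulnA.
  by apply: leq_pmulr; rewrite muln_gt0 B_gt0 L_gt0.
have powK : q ^ (K * L - r.*2) * q ^ r.*2 = B.+1 ^ K.
  rewrite -expnD subnK // /B prednK; last by rewrite expn_gt0; lia.
  by rewrite -expnM mulnC.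
have := bernoulli_nat B K.
rewrite (_ : B + K = B * (q ^ r.*2).+1); last by rewrite /K; ring.
rewrite (_ : B ^ K * (B * (q ^ r.*2).+1) = B ^ K * (q ^ r.*2).+1 * B); last by ring.
rewrite leq_pmul2r // => bern.
rewrite -(ltn_pmul2r pow_gt0) powK; apply: leq_trans bern.
by rewrite ltn_mul2l expn_gt0 B_gt0 /=; lia.
Qed.

Section Locality.
Variable S : finType.
Local Open Scope ring_scope.
Implicit Types (x y : config S) (c d : config S -> config S).

Lemma window_eqP (rho : nat) x y i j :
  window rho x i = window rho y j <->
  (forall k : int, (`|k| <= rho)%N -> x (i + k) = y (j + k)).
Proof.
split.
- move=> /ffunP eq_win k k_le.
  have k_lt : (absz (k + rho%:Z)%R < rho.*2.+1)%N by lia.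
  have := eq_win (Ordinal k_lt); rewrite !ffunE /=.
  have -> : i - rho%:Z + (absz (k + rho%:Z)%R)%:Z = i + k by lia.
  by have -> : j - rho%:Z + (absz (k + rho%:Z)%R)%:Z = j + k by lia.
- move=> eq_nbhd; apply/ffunP => k; rewrite !ffunE; have k_lt := ltn_ord k.
  have -> : i - rho%:Z + k%:Z = i + (k%:Z - rho%:Z) by lia.
  have -> : j - rho%:Z + k%:Z = j + (k%:Z - rho%:Z) by lia.
  by apply: eq_nbhd; lia.
Qed.

Lemma extend_in (r : nat) (w : word S r) (j : int) : (`|j| <= r)%N ->
  extend w j = w (inord (absz (j + r%:Z)%R)).
Proof.
by move=> j_le; rewrite /extend (_ : (0 <= j + r%:Z) && _ = true) //; lia.
Qed.

Lemma window_extend (r : nat) (w : word S r) : window r (extend w) 0 = w.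
Proof.
apply/ffunP => k; have k_lt := ltn_ord k.
rewrite ffunE extend_in; last by lia.
by congr (w _); apply/val_inj; rewrite /= inordK; lia.
Qed.

Definition local (rho : nat) c :=
  forall x y i j, window rho x i = window rho y j -> c x i = c y j.

Lemma localP rho c : local rho c <-> has_radius rho c.
Proof.
split.
- move=> c_loc; exists (fun w => c (extend w) 0) => x i.
  by apply: c_loc; rewrite window_extend.
- by move=> [F cF] x y i j eq_win; rewrite !cF eq_win.
Qed.

Lemma local_mono rho rho' c : (rho <= rho')%N -> local rho c -> local rho' c.
Proof.
move=> le_rho c_loc x y i j /window_eqP eq_win.
by apply: c_loc; apply/window_eqP => k k_le; apply: eq_win; lia.
Qed.

Lemma local_comp r s c d : local r c -> local s d -> local (r + s) (fun x => c (d x)).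
Proof.
move=> c_loc d_loc x y i j /window_eqP eq_win; apply: c_loc; apply/window_eqP => k k_le.
apply: d_loc; apply/window_eqP => l l_le.
by rewrite -!addrA; apply: eq_win; lia.
Qed.

Lemma local_ext r c x y i : local r c -> x =1 y -> c x i = c y i.
Proof. by move=> c_loc eq_xy; apply: c_loc; apply/window_eqP => k _; apply: eq_xy. Qed.

Definition restrict r (w : word S r.+1) : word S r := window r (extend w) 0.
Definition split_word r (w : word S r.+1) : S * word S r * S :=
  (w ord0, restrict w, w ord_max).
Definition join_word r (t : S * word S r * S) : word S r.+1 :=
  [ffun k : 'I_(r.+1.*2.+1) => if (k == 0 :> nat) then t.1.1
     else if (k == r.+1.*2 :> nat) then t.2 else t.1.2 (inord k.-1)].

Lemma restrictE r (w : word S r.+1) (k : 'I_(r.*2.+1)) :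
  restrict w k = w (inord k.+1).
Proof.
have k_lt := ltn_ord k; rewrite /restrict ffunE extend_in; last by lia.
by congr (w _); apply/val_inj; rewrite /= !inordK; lia.
Qed.

Lemma split_wordK r : cancel (@split_word r) (@join_word r).
Proof.
move=> w; apply/ffunP => k; have k_lt := ltn_ord k; rewrite ffunE /=.
case: eqP => [k0|k_ne0]; first by congr (w _); apply/val_inj.
case: eqP => [kmax|k_nemax]; first by congr (w _); apply/val_inj; rewrite /= kmax.
by rewrite restrictE; congr (w _); apply/val_inj; rewrite /= !inordK; lia.
Qed.

Lemma join_wordK r : cancel (@join_word r) (@split_word r).
Proof.
move=> [[s w] t]; rewrite /split_word /= !ffunE /= eqxx.
congr (_, _, _); apply/ffunP => k; have k_lt := ltn_ord k.
rewrite restrictE ffunE /= inordK; last by lia.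
case: eqP => [|_]; first by lia.
case: eqP => [|_]; first by lia.
by congr (w _); apply/val_inj; rewrite /= inordK; lia.
Qed.

Lemma Dset_succ r c d : local r c -> local r d ->
  Dset r.+1 c d = (@split_word r) @^-1: (setX (setX setT (Dset r c d)) setT).
Proof.
move=> c_loc d_loc; apply/setP => w; rewrite /Dset !inE /= andbT.
have eq_win : window r (extend w) 0 = window r (extend (restrict w)) 0
  by rewrite window_extend.
by rewrite /local_rule (c_loc _ _ _ _ eq_win) (d_loc _ _ _ _ eq_win).
Qed.

Lemma delta_at_succ r c d : (0 < #|S|)%N -> local r c -> local r d ->
  delta_at r.+1 c d = delta_at r c d.
Proof.
move=> S_gt0 c_loc d_loc.
have card_succ : #|Dset r.+1 c d| = (#|S| * #|Dset r c d| * #|S|)%N.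
  rewrite Dset_succ // -(can2_imset_pre _ (@join_wordK r) (@split_wordK r)).
  by rewrite card_imset ?cardsX ?cardsT //; apply: can_inj (@join_wordK r).
rewrite /delta_at card_succ (_ : r.+1.*2.+1 = r.*2.+1 + 2)%N; last by lia.
have S_neq0 : (#|S|%:R : rat) != 0 by rewrite pnatr_eq0 -lt0n.
have pow_neq0 : ((#|S| ^ r.*2.+1)%:R : rat) != 0 by rewrite pnatr_eq0 -lt0n expn_gt0 S_gt0.
by rewrite expnD !natrM; field; rewrite S_neq0 pow_neq0.
Qed.

Lemma delta_at_add r c d m : (0 < #|S|)%N -> local r c -> local r d ->
  delta_at (r + m) c d = delta_at r c d.
Proof.
move=> S_gt0 c_loc d_loc; elim: m => [|m IH]; first by rewrite addn0.
by rewrite addnS delta_at_succ //; apply: local_mono (leq_addr m r) _.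
Qed.

Lemma deltaE r c d N : (0 < #|S|)%N -> local r c -> local r d -> (r <= N)%N ->
  delta c d = delta_at N c d.
Proof.
move=> S_gt0 c_loc d_loc le_rN.
have [/localP cR /localP dR] : has_radius (common_radius c d) c /\
    has_radius (common_radius c d) d.
  apply: (epsilon_spec (inhabits 0%N) (fun r0 => has_radius r0 c /\ has_radius r0 d)).
  by exists r; split; apply/localP.
rewrite /delta -(delta_at_add N S_gt0 cR dR) addnC delta_at_add //.
exact: local_mono le_rN _.
exact: local_mono le_rN _.
Qed.

End Locality.

Section Pattern.
Variables (S : finType) (a b : S) (R : nat).
Hypothesis a_neq_b : a != b.
Hypothesis R_gt0 : (0 < R)%N.
Local Open Scope ring_scope.
Implicit Types (x y : config S) (c d : config S -> config S).

Lemma card_S_gt1 : (1 < #|S|)%N.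
Proof. by apply/card_gt1P; exists a, b. Qed.

Lemma card_S_gt0 : (0 < #|S|)%N.
Proof. exact: ltnW card_S_gt1. Qed.

Definition pattern x (i : int) : bool :=
  (x (i - (R.+1)%:Z) == b) &&
  [forall k : 'I_R, (x (i - (k.+1)%:Z) == a) && (x (i + (k.+1)%:Z) == b)].

Lemma patternP x i : reflect
  (x (i - (R.+1)%:Z) = b /\
   forall k : int, 1 <= k -> k <= R%:Z -> x (i - k) = a /\ x (i + k) = b)
  (pattern x i).
Proof.
apply: (iffP andP) => [[/eqP left_end /forallP arms]|[left_end arms]].
- split => // k k_ge1 k_leR.
  have k_lt : ((absz k).-1 < R)%N by lia.
  have /andP [/eqP xl /eqP xr] := arms (Ordinal k_lt).
  by have <- : ((Ordinal k_lt : nat).+1)%:Z = k by rewrite /=; lia.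
- split; first exact/eqP.
  apply/forallP => k; have k_lt := ltn_ord k.
  by have [-> ->] := arms ((k : nat).+1%:Z) ltac:(lia) ltac:(lia); rewrite !eqxx.
Qed.

Lemma pattern_sep x i j : pattern x i -> pattern x j -> (`|j - i| <= R.+1)%N -> i = j.
Proof.
move=> /patternP [il iarm] /patternP [jl jarm] dist_le.
have [//|i_neq_j] := eqVneq i j; exfalso.
have ab : a <> b by apply/eqP.
have [ij|ji] : (0 < j - i) \/ (j - i < 0) by lia.
- have [near|far] := boolP (j - i <= R%:Z).
  + have [xa _] := iarm (R.+1%:Z - (j - i)) ltac:(lia) ltac:(lia).
    by apply: ab; rewrite -xa -jl; congr x; lia.
  + have [_ xb] := iarm 1 ltac:(lia) ltac:(lia).
    have [xa _] := jarm R%:Z ltac:(lia) ltac:(lia).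
    by apply: ab; rewrite -xb -xa; congr x; lia.
- have [near|far] := boolP (- R%:Z <= j - i).
  + have [xa _] := jarm (R.+1%:Z + (j - i)) ltac:(lia) ltac:(lia).
    by apply: ab; rewrite -xa -il; congr x; lia.
  + have [_ xb] := jarm 1 ltac:(lia) ltac:(lia).
    have [xa _] := iarm R%:Z ltac:(lia) ltac:(lia).
    by apply: ab; rewrite -xb -xa; congr x; lia.
Qed.

Lemma pattern_ext x y i j :
  (forall k : int, k != 0 -> (`|k| <= R.+1)%N -> x (i + k) = y (j + k)) ->
  pattern x i = pattern y j.
Proof.
have imp x' y' i' j' :
    (forall k : int, k != 0 -> (`|k| <= R.+1)%N -> x' (i' + k) = y' (j' + k)) ->
    pattern x' i' -> pattern y' j'.
  move=> eq_nbhd /patternP [xl xarm]; apply/patternP; split.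
    by rewrite -xl; symmetry; apply: eq_nbhd; lia.
  move=> k k_ge1 k_leR; have [xa xb] := xarm k k_ge1 k_leR.
  by rewrite -xa -xb; split; symmetry; apply: eq_nbhd; lia.
move=> eq_nbhd; apply/idP/idP; apply: imp => // k k_neq0 k_le.
by rewrite eq_nbhd.
Qed.

Definition swap (s : S) : S := if s == a then b else if s == b then a else s.

Lemma swapK : involutive swap.
Proof.
have ab : a <> b by apply/eqP.
by move=> s; rewrite /swap; repeat (case: eqP => /=; try congruence).
Qed.

Definition swap_centres x : config S :=
  fun i => if pattern x i then swap (x i) else x i.

Lemma swap_centres_local : local R.+1 swap_centres.
Proof.
move=> x y i j /window_eqP eq_nbhd; rewrite /swap_centres.
rewrite (@pattern_ext x y i j); last by move=> k _ k_le; apply: eq_nbhd.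
by have := eq_nbhd 0 isT; rewrite !addr0 => ->.
Qed.

Lemma swap_centres_punctured x j k : pattern x j -> k != 0 -> (`|k| <= R.+1)%N ->
  swap_centres x (j + k) = x (j + k).
Proof.
move=> xj k_neq0 k_le; rewrite /swap_centres; case: ifP => // xjk.
have := pattern_sep xj xjk; rewrite (_ : j + k - j = k); last by lia.
by move=> /(_ k_le) jE; move/eqP: k_neq0; case; lia.
Qed.

Lemma pattern_swap_centres x i : pattern (swap_centres x) i = pattern x i.
Proof.
have keep y j : pattern y j -> pattern (swap_centres y) j.
  by move=> yj; rewrite (@pattern_ext _ y j j) // => k; apply: swap_centres_punctured.
apply/idP/idP => [gxi|]; last exact: keep.
rewrite -(@pattern_ext (swap_centres x) x i i) // => k k_neq0 k_le.
rewrite {1}/swap_centres; case: ifP => // xik.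
have := pattern_sep gxi (keep _ _ xik); rewrite (_ : i + k - i = k); last by lia.
by move=> /(_ k_le) iE; move/eqP: k_neq0; case; lia.
Qed.

Lemma swap_centresK : involutive swap_centres.
Proof.
move=> x; apply: functional_extensionality => i.
by rewrite {1}/swap_centres pattern_swap_centres /swap_centres; case: pattern; rewrite ?swapK.
Qed.

Definition origin_pattern : config S :=
  fun p => if p < 0 then (if p == - (R.+1)%:Z then b else a) else b.

Lemma pattern_origin : pattern origin_pattern 0.
Proof.
apply/patternP; split; first by rewrite /origin_pattern sub0r ifT ?eqxx //; lia.
move=> k k_ge1 k_leR; rewrite /origin_pattern sub0r add0r; split.
  by rewrite ifT ?ifF //; [apply/negbTE|]; lia.
by rewrite ifF //; apply/negbTE; lia.
Qed.

Lemma swap_centres_moves : swap_centres origin_pattern 0 <> origin_pattern 0.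
Proof.
rewrite /swap_centres pattern_origin /origin_pattern ltxx /swap.
have ab : a <> b by apply/eqP.
by repeat (case: eqP => /=; try congruence).
Qed.

Lemma change_near_pattern r c x i : local r c ->
  c (swap_centres x) i <> c x i -> exists i', (`|i' - i| <= r)%N /\ pattern x i'.
Proof.
move=> c_loc changed.
have [/existsP [k xk]|none] :=
  boolP [exists k : 'I_(r.*2.+1), pattern x (i - r%:Z + k%:Z)].
  by exists (i - r%:Z + k%:Z); split => //; have := ltn_ord k; lia.
exfalso; apply: changed; apply: c_loc; apply/window_eqP => k k_le.
rewrite /swap_centres; case: ifP => // xik; exfalso; move/negP: none; apply.
have k_lt : (absz (k + r%:Z)%R < r.*2.+1)%N by lia.
apply/existsP; exists (Ordinal k_lt) => /=.
by have -> : i - r%:Z + (absz (k + r%:Z)%R)%:Z = i + k by lia.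
Qed.

(* In a window of radius N, the positions of the right arm of a pattern
   centred at k - r (as an index of a window of radius r). *)
Definition arm_positions N r (k : 'I_(r.*2.+1)) : {set 'I_(N.*2.+1)} :=
  [set p : 'I_(N.*2.+1) |
   (1 <= p%:Z - N%:Z - (k%:Z - r%:Z)) && (p%:Z - N%:Z - (k%:Z - r%:Z) <= R%:Z)].

Lemma card_arm_positions N r (k : 'I_(r.*2.+1)) : (r + R.+1 <= N)%N -> (R <= #|arm_positions N k|)%N.
Proof.
move=> N_large; have k_lt := ltn_ord k.
pose pos (l : 'I_R) : 'I_(N.*2.+1) := inord (N - r + k + l).+1.
have pos_inj : injective pos.
  move=> l1 l2 eq_pos; have l1_lt := ltn_ord l1; have l2_lt := ltn_ord l2.
  by apply: ord_inj; move/(congr1 val): eq_pos; rewrite /= !inordK; lia.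
rewrite -[X in (X <= _)%N](card_ord R) -(card_imset _ pos_inj) subset_leq_card //.
apply/subsetP => _ /imsetP [l _ ->]; have l_lt := ltn_ord l.
by rewrite inE /pos /= inordK; [apply/andP; split|]; lia.
Qed.

Lemma delta_pattern_bound rho r c d : local rho c -> local rho d ->
  (forall x, c x 0 <> d x 0 -> exists i, (`|i| <= r)%N /\ pattern x i) ->
  delta c d * (#|S| ^ R)%:R <= (r.*2.+1)%:R.
Proof.
move=> c_loc d_loc near; set N := (rho + r + R.+1)%N.
rewrite (@deltaE _ rho c d N card_S_gt0 c_loc d_loc); last by rewrite /N; lia.
pose arm_words (k : 'I_(r.*2.+1)) := [set w : word S N | [forall p in arm_positions N k, w p == b]].
have cover : Dset N c d \subset \bigcup_(k < r.*2.+1) arm_words k.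
  apply/subsetP => w; rewrite inE => /eqP /near [i [i_le /patternP [_ arms]]].
  have k_lt : (absz (i + r%:Z)%R < r.*2.+1)%N by lia.
  apply/bigcupP; exists (Ordinal k_lt) => //; rewrite inE.
  apply/forall_inP => p; rewrite inE /= => /andP [p_ge p_le].
  have [_ wb] := arms (p%:Z - N%:Z - i) ltac:(lia) ltac:(lia).
  rewrite extend_in in wb; last by have := ltn_ord p; lia.
  by apply/eqP; rewrite -wb; congr (w _); apply/val_inj; rewrite /= inordK; lia.
have card_arm_words k : (#|arm_words k| <= #|S| ^ (N.*2.+1 - R))%N.
  rewrite card_words_fixed_on leq_pexp2l ?card_S_gt0 // leq_sub2l //.
  by apply: card_arm_positions; rewrite /N; lia.
have card_D : (#|Dset N c d| <= r.*2.+1 * #|S| ^ (N.*2.+1 - R))%N.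
  apply: leq_trans (subset_leq_card cover) _; apply: leq_trans (card_bigcup_le _) _.
  rewrite -[X in (_ <= X * _)%N](card_ord r.*2.+1) -sum_nat_const.
  by apply: leq_sum => k _; apply: card_arm_words.
rewrite /delta_at mulrAC ler_pdivrMr; last by rewrite ltr0n expn_gt0 card_S_gt0.
rewrite -!natrM ler_nat; apply: leq_trans (leq_mul card_D (leqnn _)) _.
by rewrite -mulnA -expnD subnK //; rewrite /N; lia.
Qed.

Lemma delta_small rho r c d eps : local rho c -> local rho d ->
  (forall x, c x 0 <> d x 0 -> exists i, (`|i| <= r)%N /\ pattern x i) ->
  (r.*2.+1)%:R < eps * (#|S| ^ R)%:R -> delta c d < eps.
Proof.
move=> c_loc d_loc near lt_eps.
rewrite -(@ltr_pM2r _ (#|S| ^ R)%:R); last by rewrite ltr0n expn_gt0 card_S_gt0.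
exact: le_lt_trans (delta_pattern_bound c_loc d_loc near) lt_eps.
Qed.

Definition toggle (s : S) : S := if s == b then a else b.
Definition recolor c x (i : int) : S := if pattern x i then toggle (c x i) else c x i.

Lemma recolor_close r c eps : local r c -> (r.*2.+1)%:R < eps * (#|S| ^ R)%:R ->
  [/\ isCA (recolor c), recolor c <> c & delta c (recolor c) < eps].
Proof.
move=> c_loc lt_eps.
have c_loc' : local (r + R.+1) c by apply: local_mono c_loc; lia.
have rec_loc : local (r + R.+1) (recolor c).
  move=> x y i j eq_win; rewrite /recolor (c_loc' _ _ _ _ eq_win).
  move/window_eqP: eq_win => eq_nbhd.
  by rewrite (@pattern_ext x y i j) // => k _ k_le; apply: eq_nbhd; lia.
split; first by exists (r + R.+1); apply/localP.
  move=> /(congr1 (fun f => f origin_pattern 0)); rewrite /recolor pattern_origin /toggle.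
  by case: eqP => [->|c_neq /esym //]; apply/eqP.
apply: (delta_small c_loc' rec_loc _ lt_eps) => x; rewrite /recolor.
by case: ifP => [x0 _|_ []]; first by exists 0.
Qed.

Lemma swap_close r c eps : local r c -> (r.*2.+1)%:R < eps * (#|S| ^ R)%:R ->
  isCA (fun x => c (swap_centres x)) /\ delta c (fun x => c (swap_centres x)) < eps.
Proof.
move=> c_loc lt_eps.
have c_loc' : local (r + R.+1) c by apply: local_mono c_loc; lia.
have d_loc := local_comp c_loc swap_centres_local.
split; first by exists (r + R.+1); apply/localP.
apply: (delta_small c_loc' d_loc _ lt_eps) => x changed.
have [i [i_le xi]] := change_near_pattern c_loc (fun E => changed (esym E)).
by exists i; rewrite subr0 in i_le.
Qed.

Definition flip_at (i : int) x : config S :=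
  fun p => if p == i then swap (x p) else x p.

(* If c o g_R = c and 2r <= R+1, flipping one pattern centre does not change
   the image under c: near the centre, x can be replaced by a configuration y
   in which i is the only occurrence of the pattern, so that g_R y = flip y. *)
Lemma flip_at_invariant r c x i j : local r c -> (r.*2 <= R.+1)%N ->
  (forall x, c (swap_centres x) = c x) -> pattern x i -> c (flip_at i x) j = c x j.
Proof.
move=> c_loc r_small c_inv xi; have ab : a <> b by apply/eqP.
have [near|far] := boolP (`|j - i| <= r)%N; last first.
  by apply: c_loc; apply/window_eqP => k k_le; rewrite /flip_at ifF //; apply/negbTE; lia.
pose y : config S := fun p => if (`|p - i| <= R.+1)%N then x p else a.
have yi : pattern y i.
  by rewrite (@pattern_ext y x i i) // => k _ k_le; rewrite /y ifT //; lia.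
have swap_y : swap_centres y =1 flip_at i y.
  move=> p; rewrite /swap_centres /flip_at; case: eqP => [->|p_neq]; first by rewrite yi.
  case: ifP => // yp; exfalso.
  have [p_near|p_far] := boolP (`|p - i| <= R.+1)%N.
    by apply: p_neq; apply: (pattern_sep yp yi); lia.
  move/patternP: yp => [yl yarm].
  have [ip|pi] := boolP (i < p).
    have [_ yb] := yarm 1 ltac:(lia) ltac:(lia).
    by apply: ab; rewrite -yb /y ifF //; apply/negbTE; lia.
  by apply: ab; rewrite -yl /y ifF //; apply/negbTE; lia.
have flip_xy : c (flip_at i x) j = c (flip_at i y) j.
  apply: c_loc; apply/window_eqP => k k_le.
  by rewrite /flip_at /y [X in _ = if _ then swap X else X]ifT //; lia.
have xy : c x j = c y j.
  by apply: c_loc; apply/window_eqP => k k_le; rewrite /y ifT //; lia.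
by rewrite flip_xy xy -(c_inv y); apply: local_ext c_loc _ => p; rewrite swap_y.
Qed.

Section GardenOfEden.
Variables (r : nat) (c : config S -> config S).
Hypothesis c_loc : local r c.
Hypothesis r_small : (r.*2 <= R.+1)%N.
Hypothesis c_inv : forall x, c (swap_centres x) = c x.

Let L := R.*2.+2.
Definition blocks k := {ffun 'I_k.+1 -> {ffun 'I_L -> S}}.

Definition pattern_block : {ffun 'I_L -> S} :=
  [ffun s : 'I_L => if (s == 0 :> nat) then b else if (s <= R)%N then a else b].
Definition flipped_block : {ffun 'I_L -> S} :=
  [ffun s : 'I_L => if (s == R.+1 :> nat) then a else pattern_block s].

Definition concat_blocks k (u : blocks k) : config S := fun p =>
  if (0 <= p) && (p < (k.+1 * L)%N%:Z)
  then u (inord (absz p %/ L)) (inord (absz p %% L)) else a.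

Lemma block_divmod n (t : 'I_n) (s : 'I_L) :
  ((t * L + s) %/ L = t /\ (t * L + s) %% L = s)%N.
Proof. by rewrite divnMDl // divn_small ?addn0 // modnMDl modn_small. Qed.

Lemma block_end n (t : 'I_n) : (t * L + L <= n * L)%N.
Proof. by rewrite addnC -mulSn leq_mul2r ltn_ord orbT. Qed.

Lemma concat_blocksE k (u : blocks k) (t : 'I_k.+1) (s : 'I_L) :
  concat_blocks u ((t * L + s)%N%:Z) = u t s.
Proof.
have s_lt := ltn_ord s; have t_end := block_end t.
rewrite /concat_blocks ifT; last by apply/andP; split; lia.
rewrite absz_nat; have [-> ->] := block_divmod t s.
by congr (u _ _); apply/val_inj; rewrite /= inordK.
Qed.

Lemma concat_blocks_pos k (p : int) : 0 <= p -> p < (k.+1 * L)%N%:Z ->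
  exists (t : 'I_k.+1) (s : 'I_L), p = (t * L + s)%N%:Z.
Proof.
move=> p_ge p_lt; have p_lt' : (absz p < k.+1 * L)%N by lia.
have t_lt : (absz p %/ L < k.+1)%N by rewrite ltn_divLR.
have s_lt : (absz p %% L < L)%N by rewrite ltn_pmod.
by exists (Ordinal t_lt), (Ordinal s_lt); rewrite /= -divn_eq; lia.
Qed.

Lemma pattern_in_block k (v : blocks k) (t : 'I_k.+1) :
  v t = pattern_block -> pattern (concat_blocks v) ((t * L + R.+1)%N%:Z).
Proof.
move=> vt; have t_end := block_end t.
apply/patternP; split.
  have -> : (t * L + R.+1)%N%:Z - R.+1%:Z = (t * L + (ord0 : 'I_L))%N%:Z by rewrite /=; lia.
  by rewrite concat_blocksE vt ffunE.
move=> j j_ge1 j_leR; split.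
  have s_lt : (R.+1 - absz j < L)%N by lia.
  have -> : (t * L + R.+1)%N%:Z - j = (t * L + (Ordinal s_lt : 'I_L))%N%:Z by rewrite /=; lia.
  by rewrite concat_blocksE vt ffunE /= ifF ?ifT //; [|apply/negbTE]; lia.
have s_lt : (R.+1 + absz j < L)%N by rewrite /L; lia.
have -> : (t * L + R.+1)%N%:Z + j = (t * L + (Ordinal s_lt : 'I_L))%N%:Z by rewrite /=; lia.
by rewrite concat_blocksE vt ffunE /= !ifF //; apply/negbTE; lia.
Qed.

Definition flip_block k (n : nat) (v : blocks k) : blocks k :=
  [ffun t : 'I_k.+1 => if (t == n :> nat) && (v t == pattern_block) then flipped_block else v t].

Lemma concat_flip_block k (v : blocks k) (t : 'I_k.+1) : v t = pattern_block ->
  concat_blocks (flip_block t v) =1 flip_at ((t * L + R.+1)%N%:Z) (concat_blocks v).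
Proof.
move=> vt p; rewrite /flip_at; have t_end := block_end t.
have [/andP [p_ge p_lt]|p_out] := boolP ((0 <= p) && (p < (k.+1 * L)%N%:Z)); last first.
  rewrite /concat_blocks (negbTE p_out) ifF //; apply/negbTE.
  by move: p_out; apply: contra => /eqP ->; apply/andP; split; lia.
have [t' [s' ->]] := concat_blocks_pos p_ge p_lt; rewrite !concat_blocksE ffunE.
have [->|t'_neq] := eqVneq t' t.
  rewrite vt !eqxx /= ffunE; have [s_eq|s_neq] := eqVneq (s' : nat) R.+1.
    rewrite ifT; last by apply/eqP; lia.
    rewrite ffunE /= !ifF ?s_eq //; last by apply/negbTE; lia.
    by rewrite /swap eqxx ifF // eq_sym; apply/negbTE.
  by rewrite ifF //; apply/negbTE; lia.
rewrite ifF; last by apply/negbTE/nandP; left; exact: t'_neq.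
rewrite ifF //; apply/negbTE/negP => /eqP /(congr1 (fun z => absz z %/ L)%N) /=.
have [-> _] := block_divmod t' s'; rewrite divnMDl // divn_small ?addn0; last by rewrite /L; lia.
by move=> t_eq; move/eqP: t'_neq; apply; apply: val_inj.
Qed.

Definition image_word k (u : blocks k) : {ffun 'I_(k.+1 * L - r.*2) -> S} :=
  [ffun j : 'I_(k.+1 * L - r.*2) => c (concat_blocks u) ((j : nat)%:Z + r%:Z)].

(* Since a pattern centre can be flipped freely, so can a pattern block. *)
Lemma image_word_flip_block k n (v : blocks k) : image_word (flip_block n v) = image_word v.
Proof.
have [/existsP [t /andP [/eqP tn /eqP vt]]|none] :=
  boolP [exists t : 'I_k.+1, (t == n :> nat) && (v t == pattern_block)]; last first.
  congr image_word; apply/ffunP => t; rewrite ffunE ifF //; apply/negbTE.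
  by apply: contra none => tn; apply/existsP; exists t.
apply/ffunP => j; rewrite !ffunE -tn (local_ext _ c_loc (concat_flip_block vt)).
exact: (flip_at_invariant _ c_loc r_small c_inv (pattern_in_block vt)).
Qed.

Definition flip_blocks_below k (n : nat) (u : blocks k) : blocks k :=
  [ffun t : 'I_k.+1 => if (t < n)%N && (u t == pattern_block) then flipped_block else u t].

Lemma flip_blocks_below_succ k n (u : blocks k) :
  flip_blocks_below n.+1 u = flip_block n (flip_blocks_below n u).
Proof.
apply/ffunP => t; rewrite !ffunE ltnS leq_eqVlt.
by case: (ltngtP t n) => t_n //=; rewrite ?andbF ?t_n ?eqxx.
Qed.

Lemma image_word_flip_blocks k n (u : blocks k) :
  image_word (flip_blocks_below n u) = image_word u.
Proof.
elim: n => [|n IH]; last by rewrite flip_blocks_below_succ image_word_flip_block.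
by congr image_word; apply/ffunP => t; rewrite ffunE.
Qed.

Lemma flip_blocks_avoid k (u : blocks k) t : flip_blocks_below k.+1 u t != pattern_block.
Proof.
rewrite ffunE ltn_ord /=; have [_|//] := eqVneq (u t) pattern_block.
apply/negP => /eqP /(congr1 (fun w : {ffun 'I_L -> S} => w (inord R.+1))).
rewrite !ffunE /= inordK; last by rewrite /L; lia.
by rewrite eqxx ifF; [move/eqP; rewrite (negbTE a_neq_b) | apply/negbTE; lia].
Qed.

Lemma image_word_surj : (forall y, exists x, c x = y) ->
  forall k (v : {ffun 'I_(k.+1 * L - r.*2) -> S}), exists u : blocks k, image_word u = v.
Proof.
move=> surj k v.
pose y : config S := fun p =>
  if 0 <= p - r%:Z then odflt a (omap v (insub (absz (p - r%:Z)%R))) else a.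
have [x cx] := surj y.
exists [ffun t : 'I_k.+1 => [ffun s : 'I_L => x ((t * L + s)%N%:Z)]].
apply/ffunP => j; have j_lt := ltn_ord j; rewrite ffunE.
transitivity (c x ((j : nat)%:Z + r%:Z)).
  apply: c_loc; apply/window_eqP => l l_le.
  have p_ge : 0 <= (j : nat)%:Z + r%:Z + l by lia.
  have p_lt : (j : nat)%:Z + r%:Z + l < (k.+1 * L)%N%:Z by lia.
  by have [t [s ->]] := concat_blocks_pos p_ge p_lt; rewrite concat_blocksE !ffunE.
rewrite cx /y ifT; last by lia.
have -> : absz ((j : nat)%:Z + r%:Z - r%:Z)%R = j by lia.
by rewrite valK.
Qed.

(* Counting: all words of length (k+1)L - 2r are images of sequences of k+1
   blocks avoiding pattern_block. *)
Lemma image_word_count : (forall y, exists x, c x = y) ->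
  forall k, (#|S| ^ (k.+1 * L - r.*2) <= (#|S| ^ L).-1 ^ k.+1)%N.
Proof.
move=> surj k; pose avoiding := family (fun _ : 'I_k.+1 => predC1 pattern_block).
have covered : [set: {ffun 'I_(k.+1 * L - r.*2) -> S}] \subset
    [set image_word u | u in avoiding].
  apply/subsetP => v _; have [u <-] := image_word_surj surj v.
  apply/imsetP; exists (flip_blocks_below k.+1 u); last by rewrite image_word_flip_blocks.
  by apply/familyP => t; apply: flip_blocks_avoid.
have := leq_trans (subset_leq_card covered) (leq_imset_card _ _).
rewrite cardsT card_ffun card_ord card_family foldrE big_map big_enum /=.
rewrite (eq_bigr (fun _ => (#|S| ^ L).-1)) ?prod_nat_const ?card_ord // => t _.
by rewrite cardC1 card_ffun card_ord.
Qed.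
End GardenOfEden.

Lemma swap_invariant_not_surjective r c : local r c -> (r.*2 <= R.+1)%N ->
  (forall x, c (swap_centres x) = c x) -> ~ (forall y, exists x, c x = y).
Proof.
move=> c_loc r_small c_inv surj.
have [K_gt0 gap] := @block_count_gap #|S| R.*2.+2 r card_S_gt1 isT.
have := image_word_count c_loc r_small c_inv surj (((#|S| ^ R.*2.+2).-1 * #|S| ^ r.*2).-1).
by rewrite prednK // leqNgt gap.
Qed.
End Pattern.

Lemma choose_pattern_length (S : finType) (r : nat) (eps : rat) :
  (1 < #|S|)%N -> (0 < eps)%R ->
  exists R, [/\ (0 < R)%N, (r.*2 <= R.+1)%N & ((r.*2.+1)%:R < eps * (#|S| ^ R)%:R)%R].
Proof.
move=> S_gt1 eps_gt0; set M := Num.Def.archi_bound ((r.*2.+1)%:R / eps : rat).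
have M_gt : ((r.*2.+1)%:R / eps < M%:R :> rat)%R.
  by apply: archi_boundP; apply: divr_ge0 => //; apply: ltW.
exists (M + r.*2).+1; split => //; first by lia.
have M_lt : (M < #|S| ^ (M + r.*2).+1)%N by apply: leq_trans (ltn_expl _ S_gt1); lia.
by rewrite mulrC -ltr_pdivrMr //; apply: lt_trans M_gt _; rewrite ltr_nat.
Qed.

Lemma perfect_CA (S : finType) : (1 < #|S|)%N -> perfect (@isCA S).
Proof.
move=> S_gt1 c [r /localP c_loc] eps eps_gt0.
have [a [b [_ _ a_neq_b]]] := card_gt1P S_gt1.
have [R [R_gt0 _ lt_eps]] := choose_pattern_length r S_gt1 eps_gt0.
have [d_CA d_neq d_close] := recolor_close a_neq_b R_gt0 c_loc lt_eps.
by exists (recolor a b R c).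
Qed.

Lemma perfect_REV (S : finType) : (1 < #|S|)%N -> perfect (@isREV S).
Proof.
move=> S_gt1 c [[r /localP c_loc] c_inj] eps eps_gt0.
have [a [b [_ _ a_neq_b]]] := card_gt1P S_gt1.
have [R [R_gt0 _ lt_eps]] := choose_pattern_length r S_gt1 eps_gt0.
have [d_CA d_close] := swap_close a_neq_b R_gt0 c_loc lt_eps.
have g_inj := inv_inj (swap_centresK a_neq_b R_gt0).
exists (fun x => c (swap_centres a b R x)); split; [split => // x y /c_inj /g_inj //|split => //].
move=> /(congr1 (fun f => f (origin_pattern a b R))) /c_inj g_fix.
by apply: (swap_centres_moves a_neq_b R_gt0); rewrite g_fix.
Qed.

Lemma perfect_SUR (S : finType) : (1 < #|S|)%N -> perfect (@isSUR S).
Proof.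
move=> S_gt1 c [[r /localP c_loc] c_surj] eps eps_gt0.
have [a [b [_ _ a_neq_b]]] := card_gt1P S_gt1.
have [R [R_gt0 r_small lt_eps]] := choose_pattern_length r S_gt1 eps_gt0.
have [d_CA d_close] := swap_close a_neq_b R_gt0 c_loc lt_eps.
exists (fun x => c (swap_centres a b R x)); split; last split => //.
  split => // y; have [x <-] := c_surj y.
  by exists (swap_centres a b R x); rewrite swap_centresK.
move=> c_inv; apply: (swap_invariant_not_surjective a_neq_b R_gt0 c_loc r_small _ c_surj).
by move=> x; apply: (congr1 (fun f => f x) c_inv).
Qed.

Theorem mainTheorem7 (S : finType) (hS : 1 < #|S|) :
  perfect (@isCA S) /\ perfect (@isSUR S) /\ perfect (@isREV S).
Proof. by split; [apply: perfect_CA | split; [apply: perfect_SUR | apply: perfect_REV]]. Qed.
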